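(* Let $n\ge3$ be odd and let $D\subseteq\{0,1,\dots,n-1\}$ with $|D|=2$. Then the unidirectional cycle $\overrightarrow{C_n}$ is $(\{0,1,\dots,n-1\}\setminus D)$-antimagic.
   Context: An oriented graph is a simple graph each of whose edges is given one direction. For vertices $u,v$, $d(u,v)$ is the length of a shortest directed path from $u$ to $v$ ($d(u,u)=0$). For a set $D$ of nonnegative integers, $N_D(v)=\{y : d(v,y)\in D\}$; for a bijection $f:V\to\{1,\dots,|V|\}$, $\omega_D(v)=\sum_{x\in N_D(v)}f(x)$ (empty sum $0$); $f$ is $D$-antimagic if distinct vertices have distinct $D$-weights, and the graph is $D$-antimagic if such an $f$ exists. The unidirectional cycle $\overrightarrow{C_n}$ ($n\ge3$) has vertices $v_1,\dots,v_n$ and arcs $(v_i,v_{i+1})$ for $1\le i\le n-1$ and $(v_n,v_1)$; $d(v_i,v_j)=(j-i)\bmod n$. *)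

From mathcomp Require Import all_boot.
Set Implicit Arguments. Unset Strict Implicit. Unset Printing Implicit Defensive.

(* Unidirectional cycle C_n on vertices 'I_n (v_{i+1} <-> index i),
   arcs i -> i+1 mod n.  Directed distance d(v_i, v_j) = (j - i) mod n. *)
Definition cyc_dist (n : nat) (u v : 'I_n) : nat := (v + n - u) %% n.

(* A labeling is a bijection f : V -> {1,...,n}; we encode it as a
   bijection g : 'I_n -> 'I_n with f x = (g x).+1. *)
Definition D_weight (n : nat) (D : pred nat) (g : 'I_n -> 'I_n) (v : 'I_n) : nat :=
  \sum_(x : 'I_n | D (cyc_dist v x)) (g x).+1.

Definition D_antimagic_labeling (n : nat) (D : pred nat) (g : 'I_n -> 'I_n) : Prop :=
  bijective g /\ injective (D_weight D g).

Definition cycle_D_antimagic (n : nat) (D : pred nat) : Prop :=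
  exists g : 'I_n -> 'I_n, D_antimagic_labeling D g.

From mathcomp Require Import all_boot.
From mathcomp Require Import zify.

(* The identity labelling works.  Reindexing by d = d(v, x) gives
   w(v) = sum_{d in S} ((v + d) mod n + 1) = |S| v + c  (mod n), where S is the
   set of admissible distances and c does not depend on v.  Here |S| = n - 2,
   and gcd(n - 2, n) = gcd(n - 2, 2) = 1 for odd n, so v |-> w(v) mod n is
   already injective. *)

Lemma eqn_modM2l k n u v :
  coprime k n -> (k * u == k * v %[mod n]) = (u == v %[mod n]).
Proof.
move=> co_kn; wlog le_uv : u v / u <= v.
  move=> IH; case: (leqP u v) => [|/ltnW]; first exact: IH.
  by move=> /IH; rewrite eq_sym => ->; rewrite eq_sym.
rewrite eq_sym eqn_mod_dvd ?leq_mul2l ?le_uv ?orbT // -mulnBr.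
by rewrite Gauss_dvdr 1?coprime_sym // -eqn_mod_dvd // eq_sym.
Qed.

Lemma coprime_subn2 n : odd n -> coprime (n - 2) n.
Proof.
move=> odd_n; have [n_lt2 | n_ge2] := ltnP n 2.
  by case: n odd_n n_lt2 => [|[|]].
have -> : coprime (n - 2) n = coprime (n - 2) 2.
  by rewrite /coprime -[gcdn _ 2]gcdnDl subnK.
by rewrite coprimen2 oddB // odd_n.
Qed.

Section CycleWeights.

Variable n : nat.
Hypothesis n_gt0 : 0 < n.
Variable P : pred nat.

Definition cyc_shift (v d : 'I_n) : 'I_n := Ordinal (ltn_pmod (v + d) n_gt0).

Lemma cyc_dist_shift v d : cyc_dist v (cyc_shift v d) = d.
Proof.
rewrite /cyc_dist /= -addnBA; last exact: ltnW.
rewrite modnDml.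
have -> : v + d + (n - v) = d + n by have := ltn_ord v; lia.
by rewrite modnDr modn_small.
Qed.

Lemma cyc_shift_inj v : injective (cyc_shift v).
Proof.
by move=> d1 d2 /(congr1 (cyc_dist v)); rewrite !cyc_dist_shift => /val_inj.
Qed.

Lemma D_weight_id_mod (v : 'I_n) :
  D_weight P id v = #|[pred d : 'I_n | P d]| * v + \sum_(d : 'I_n | P d) d.+1
                    %[mod n].
Proof.
rewrite /D_weight (reindex_inj (cyc_shift_inj v)) /=.
under eq_bigl do rewrite cyc_dist_shift.
rewrite -modn_summ (eq_bigr (fun d : 'I_n => (v + d.+1) %% n)); last first.
  by move=> d _; rewrite -addn1 modnDml -addnA addn1.
by rewrite modn_summ big_split /= sum_nat_const.
Qed.

Lemma id_D_antimagic :
  coprime #|[pred d : 'I_n | P d]| n -> D_antimagic_labeling P (@id 'I_n).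
Proof.
move=> co_n; split; first by exists id.
move=> u v eq_w; apply: val_inj.
have : #|[pred d : 'I_n | P d]| * u == #|[pred d : 'I_n | P d]| * v %[mod n].
  by rewrite -(eqn_modDr (\sum_(d : 'I_n | P d) d.+1)) -!D_weight_id_mod eq_w.
by rewrite eqn_modM2l // !modn_small // => /eqP.
Qed.

End CycleWeights.

Lemma card_avoiding_distances n (D : {set 'I_n}) :
  #|[pred d : 'I_n | (d < n) && [forall e in D, d != val e :> nat]]| = n - #|D|.
Proof.
transitivity #|~: D|; last by have := cardsC D; rewrite card_ord; lia.
apply: eq_card => d; rewrite !inE ltn_ord /=; apply/forallP/idP => [nD | dND e].
  by apply/negP => dD; have := nD d; rewrite dD eqxx.
by apply/implyP => eD; apply: contraNneq dND => /val_inj ->.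
Qed.

Theorem mainTheorem16 (n : nat) (D : {set 'I_n}) :
  3 <= n -> odd n -> #|D| = 2 ->
  cycle_D_antimagic n (fun k : nat => (k < n) && [forall d in D, k != val d]).
Proof.
move=> n_ge3 odd_n card_D; have n_gt0 : 0 < n by lia.
exists id; apply: (@id_D_antimagic n n_gt0).
by rewrite card_avoiding_distances card_D coprime_subn2.
Qed.
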